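(* Let $n\ge 4$, $x_1,\dots,x_{n-1}>0$, $\gamma,\delta>0$ with $\gamma\ne1$, $\delta\ne1$, and set $x_0=1$. Let $\mathbf{P}=[p_{ij}]\in\mathbb{R}^{n\times n}$ be given by $p_{ij}=x_{j-1}/x_{i-1}$ for all $i,j$, except $p_{12}=\delta x_1$, $p_{21}=1/(\delta x_1)$, $p_{13}=\gamma x_2$, $p_{31}=1/(\gamma x_2)$. Then the characteristic polynomial of $\mathbf{P}$ is $$p_{\mathbf{P}}(\lambda)=\det(\mathbf{P}-\lambda\mathbf{I})=(-1)^n\lambda^{n-3}\left(\lambda^3-n\lambda^2-\left(\frac{\gamma}{\delta}+\frac{\delta}{\gamma}\right)-(n-3)\left(\gamma+\delta+\frac1\gamma+\frac1\delta\right)+4n-10\right).$$ *)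

From HB Require Import structures.
From mathcomp Require Import all_boot all_order all_algebra.
Set Implicit Arguments. Unset Strict Implicit. Unset Printing Implicit Defensive.
Import Order.TTheory GRing.Theory Num.Theory.
Local Open Scope ring_scope.

(* The perturbed PCM of the paper, with 0-based indices:
   row/column index i : 'I_n corresponds to the paper's index i+1.
   x : nat -> R with x 0 = 1 (paper's x_0 = 1); paper's p_{ij} = x_{j-1}/x_{i-1}
   becomes entry (i,j) = x j / x i. *)
Definition pertPCM (R : fieldType) (n : nat) (x : nat -> R) (gamma delta : R)
  : 'M[R]_n :=
  \matrix_(i < n, j < n)
    if (nat_of_ord i == 0%N) && (nat_of_ord j == 1%N) then delta * x 1%N
    else if (nat_of_ord i == 1%N) && (nat_of_ord j == 0%N) then (delta * x 1%N)^-1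
    else if (nat_of_ord i == 0%N) && (nat_of_ord j == 2%N) then gamma * x 2%N
    else if (nat_of_ord i == 2%N) && (nat_of_ord j == 0%N) then (gamma * x 2%N)^-1
    else x j / x i.

From HB Require Import structures.
From mathcomp Require Import all_boot all_order all_algebra.
From mathcomp Require Import ring.
Import Order.TTheory GRing.Theory Num.Theory.
Local Open Scope ring_scope.

(* The perturbed matrix is the rank-one consistent matrix [x_j / x_i] plus
   two rank-one corrections supported on the first row and the first column,
   so it factors as U V with U of size n x 3 and V of size 3 x n.  Sylvester's
   determinant identity det(c I_n + U V) = c^(n-3) det(c I_3 + V U) with
   c = -X reduces the characteristic polynomial to that of the 3 x 3 matrix
   V U, whose entries are n, 1, 0 and sums of the perturbation factors. *)

Lemma det_mx33 (R : comPzRingType) (F : nat -> nat -> R) :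
  \det (\matrix_(i < 3, j < 3) F i j) =
  F 0 0 * (F 1 1 * F 2 2 - F 1 2 * F 2 1)
  - F 0 1 * (F 1 0 * F 2 2 - F 1 2 * F 2 0)
  + F 0 2 * (F 1 0 * F 2 1 - F 1 1 * F 2 0).
Proof.
rewrite (expand_det_row _ ord0) !big_ord_recl big_ord0 /cofactor.
rewrite !(expand_det_row _ ord0) !big_ord_recl !big_ord0 /cofactor.
by rewrite !det_mx11 !mxE /= /bump /=; ring.
Qed.

Lemma det_scalar_add_mulmx (R : idomainType) (n k : nat) (c : R)
    (U : 'M[R]_(n, k)) (V : 'M[R]_(k, n)) :
  c != 0 -> (k <= n)%N ->
  \det (c%:M + U *m V) = c ^+ (n - k) * \det (c%:M + V *m U).
Proof.
move=> c_neq0 le_kn.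
(* Both sides are det (block_mx c%:M (-U) V 1%:M) up to the factor c ^+ k. *)
have lower : block_mx (c%:M + U *m V) (-U) 0 1%:M *m block_mx 1%:M 0 V 1%:M
    = block_mx c%:M (-U) V 1%:M.
  rewrite mulmx_block !mulmx1 ?mul0mx ?mulmx0 ?mul1mx ?addr0 add0r mulNmx.
  by rewrite addrK !add0r.
have upper : block_mx c%:M (-U) V 1%:M *m block_mx 1%:M U 0 c%:M
    = block_mx c%:M 0 V (c%:M + V *m U).
  rewrite mulmx_block !mulmx1 ?mul0mx ?mulmx0 ?mul1mx ?addr0 mul_scalar_mx.
  by rewrite mulNmx mul_mx_scalar addrN addrC.
have := congr1 determinant upper.
rewrite -lower !det_mulmx det_ublock det_lblock det_ublock det_lblock.
rewrite !det1 !det_scalar !mulr1 mul1r => eq_det.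
apply: (@mulIf _ (c ^+ k)); first by rewrite expf_neq0.
by rewrite eq_det mulrAC -exprD subnK.
Qed.

Lemma sum_ord_split3 (R : nmodType) (n : nat) (F : nat -> R) : (3 <= n)%N ->
  \sum_(i < n) F i = F 0%N + F 1%N + F 2%N + \sum_(3 <= i < n) F i.
Proof.
move=> le3n; rewrite -(big_mkord xpredT F).
rewrite (@big_ltn _ _ _ 0 n) ?(leq_trans _ le3n) //.
rewrite (@big_ltn _ _ _ 1 n) ?(leq_trans _ le3n) //.
by rewrite (@big_ltn _ _ _ 2 n) ?(leq_trans _ le3n) // !addrA.
Qed.

Section PerturbedPCM.
Context {R : fieldType} {n : nat} {x : nat -> R} {gamma delta : R}.
Hypotheses (x0 : x 0%N = 1) (x_neq0 : forall k, (k < n)%N -> x k != 0).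
Hypotheses (gamma_neq0 : gamma != 0) (delta_neq0 : delta != 0).

(* Entry (0, j) of the matrix is (1 + pert_row j) x_j and entry (i, 0) is
   (1 + pert_col i) / x_i. *)
Definition pert_row (j : nat) : R :=
  match j with 1 => delta - 1 | 2 => gamma - 1 | _ => 0 end.

Definition pert_col (i : nat) : R :=
  match i with 1 => delta^-1 - 1 | 2 => gamma^-1 - 1 | _ => 0 end.

Definition pcm_left_entry (i l : nat) : R :=
  match l with 0 => (x i)^-1 | 1 => (i == 0%N)%:R | _ => pert_col i / x i end.

Definition pcm_right_entry (l j : nat) : R :=
  match l with 0 => x j | 1 => x j * pert_row j | _ => (j == 0%N)%:R end.

Definition pcm_left : 'M[R]_(n, 3) := \matrix_(i < n, l < 3) pcm_left_entry i l.

Definition pcm_right : 'M[R]_(3, n) := \matrix_(l < 3, j < n) pcm_right_entry l j.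

Definition pcm_core (l m : nat) : R :=
  match l, m with
  | 0, 0 => n%:R | 0, 1 => 1 | 0, 2 => delta^-1 + gamma^-1 - 2
  | 1, 0 => delta + gamma - 2
  | 1, 2 => (delta - 1) * (delta^-1 - 1) + (gamma - 1) * (gamma^-1 - 1)
  | 2, 0 => 1 | 2, 1 => 1
  | _, _ => 0
  end.

Lemma pertPCM_factor : pertPCM n x gamma delta = pcm_left *m pcm_right.
Proof.
apply/matrixP => -[i lt_in] [j lt_jn].
rewrite !mxE !big_ord_recl big_ord0 !mxE /= /pcm_left_entry /pcm_right_entry.
rewrite /pert_row /pert_col.
have xi := x_neq0 _ lt_in; have xj := x_neq0 _ lt_jn.
case: i lt_in xi => [|[|[|i]]] _ xi; case: j lt_jn xj => [|[|[|j]]] _ xj /=;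
  rewrite ?x0 ?mulr0 ?mul0r ?mulr1 ?mul1r ?addr0 ?add0r ?invr1 ?divr1;
  by field; rewrite ?xi ?xj ?gamma_neq0 ?delta_neq0.
Qed.

Lemma mul_pcm_right_left : (3 <= n)%N ->
  pcm_right *m pcm_left = \matrix_(l < 3, m < 3) pcm_core l m.
Proof.
move=> le3n; apply/matrixP => -[l lt_l3] [m lt_m3]; rewrite !mxE.
under eq_bigr do rewrite !mxE.
rewrite (@sum_ord_split3 _ _ (fun i => pcm_right_entry l i * pcm_left_entry i m) le3n).
have -> : \sum_(3 <= i < n) pcm_right_entry l i * pcm_left_entry i m
    = ((l == 0%N) && (m == 0%N))%:R *+ (n - 3).
  rewrite -sumr_const_nat; apply: eq_big_nat => i /andP[le3i lt_in].
  have := x_neq0 _ lt_in; case: i le3i {lt_in} => [|[|[|i]]] // _.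
  rewrite /pcm_right_entry /pcm_left_entry /pert_row /pert_col.
  case: l lt_l3 => [|[|[|l]]] // _; case: m lt_m3 => [|[|[|m]]] // _ xi;
    by rewrite /= ?(mulr0, mul0r, divff).
have x1 := x_neq0 _ (leq_trans (isT : (1 < 3)%N) le3n).
have x2 := x_neq0 _ (leq_trans (isT : (2 < 3)%N) le3n).
rewrite /pcm_right_entry /pcm_left_entry /pcm_core /pert_row /pert_col /= x0.
case: l lt_l3 => [|[|[|l]]] // _; case: m lt_m3 => [|[|[|m]]] // _ /=;
  rewrite ?(mulr0, mul0r, mulr1, mul1r, addr0, add0r, invr1, divr1, mul0rn) //.
- have -> : n%:R = (n - 3)%:R + 3 :> R by rewrite -natrD subnK.
  by rewrite !divff //; ring.
all: by field; rewrite ?x1 ?x2 ?gamma_neq0 ?delta_neq0.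
Qed.

Lemma det_pcm_core_char : (3 <= n)%N ->
  \det ((- 'X)%:M + map_mx polyC (\matrix_(l < 3, m < 3) pcm_core l m)) =
    - ('X ^+ 3 - n%:R *: 'X ^+ 2 - ((gamma / delta + delta / gamma)%:P)
       - ((n - 3)%:R * (gamma + delta + gamma^-1 + delta^-1))%:P
       + (4 * n%:R - 10)%:P) :> {poly R}.
Proof.
move=> le3n.
have -> : (- 'X)%:M + map_mx polyC (\matrix_(l < 3, m < 3) pcm_core l m)
    = \matrix_(l < 3, m < 3) ((- 'X) *+ (nat_of_ord l == m) + (pcm_core l m)%:P).
  by apply/matrixP => l m; rewrite !mxE.
rewrite (@det_mx33 _ (fun l m => (- 'X) *+ (l == m) + (pcm_core l m)%:P)) /pcm_core /=.
set su := delta + gamma - 2.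
set w := (delta - 1) * (delta^-1 - 1) + (gamma - 1) * (gamma^-1 - 1).
(* The entry sums of the two correction vectors and of their product add up
   to 0; this kills the linear term. *)
have -> : delta^-1 + gamma^-1 - 2 = - w - su.
  by rewrite /w /su; field; rewrite gamma_neq0 delta_neq0.
have collect_constants (p : {poly R}) (a b c : R) :
    p - a%:P - b%:P + c%:P = p - (a + b - c)%:P.
  by rewrite !rmorphD !rmorphN /=; ring.
rewrite collect_constants.
have -> : gamma / delta + delta / gamma
    + (n - 3)%:R * (gamma + delta + gamma^-1 + delta^-1) - (4 * n%:R - 10)
    = (1 - n%:R) * w + su * (- w - su).
  by rewrite /su /w natrB //; field; rewrite gamma_neq0 delta_neq0.
rewrite -mul_polyC !(rmorphD, rmorphB, rmorphN, rmorphM, rmorph1, rmorph0) /=.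
ring.
Qed.

End PerturbedPCM.

Theorem theorem3 (R : realFieldType) (n : nat) (x : nat -> R) (gamma delta : R) :
  (4 <= n)%N ->
  x 0%N = 1 ->
  (forall k, (1 <= k <= n.-1)%N -> 0 < x k) ->
  0 < gamma -> 0 < delta -> gamma != 1 -> delta != 1 ->
  \det (map_mx polyC (@pertPCM R n x gamma delta) - 'X%:M) =
    (-1) ^+ n * 'X ^+ (n - 3) *
      ('X ^+ 3 - n%:R *: 'X ^+ 2 - ((gamma / delta + delta / gamma)%:P)
       - ((n - 3)%:R * (gamma + delta + gamma^-1 + delta^-1))%:P
       + (4 * n%:R - 10)%:P) :> {poly R}.
Proof.
move=> le4n x0 x_pos gamma_gt0 delta_gt0 _ _.
have le3n : (3 <= n)%N by apply: ltnW.
have x_neq0 k : (k < n)%N -> x k != 0.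
  case: k => [|k] lt_kn; first by rewrite x0 oner_neq0.
  by rewrite lt0r_neq0 // x_pos //= -ltnS prednK // (leq_trans _ le4n).
have gamma_neq0 : gamma != 0 by rewrite lt0r_neq0.
have delta_neq0 : delta != 0 by rewrite lt0r_neq0.
rewrite (pertPCM_factor x0 x_neq0 gamma_neq0 delta_neq0) map_mxM -raddfN addrC.
rewrite det_scalar_add_mulmx ?oppr_eq0 ?polyX_eq0 // -map_mxM.
rewrite (mul_pcm_right_left x0 x_neq0 gamma_neq0 delta_neq0 le3n).
rewrite (det_pcm_core_char gamma_neq0 delta_neq0 le3n) [(- 'X) ^+ _]exprNn.
have -> : (-1) ^+ n = (-1) ^+ (n - 3) * (-1) ^+ 3 :> {poly R}.
  by rewrite -exprD subnK.
ring.
Qed.
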